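(* Let $I_1,\dots,I_m,I$ be pairwise different nonempty subsets of $\{1,\dots,n\}$, let $\mathcal{A}'=\{H_{I_1},\dots,H_{I_m}\}$ and let $\mathcal{A}''_I=\{H\cap H_I: H\in\mathcal{A}'\}$ (the restriction of $\mathcal{A}'\cup\{H_I\}$ to $H_I$). Then $|\mathcal{A}'|-|\mathcal{A}''_I|$ equals the number of circuit-triples $\{I,A,B\}$ with $A,B\in\{I_1,\dots,I_m\}$.
   Context: $H_J=\ker\big(\sum_{j\in J}x_j\big)\subseteq\mathbb{Q}^n$ for $J\subseteq\{1,\dots,n\}$. A circuit-triple is a set $\{A_1,A_2,A_3\}$ of three pairwise different nonempty subsets such that one of them is the disjoint union of the other two (equivalently, their three linear forms $\sum_{i\in A_j}x_i$ span a $2$-dimensional space). *)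

From HB Require Import structures.
From mathcomp Require Import all_boot all_order all_algebra.
Set Implicit Arguments. Unset Strict Implicit. Unset Printing Implicit Defensive.
Import GRing.Theory.
Local Open Scope ring_scope.

(* column vector of the linear form sum_{j in J} x_j *)
Definition indic (n : nat) (J : {set 'I_n}) : 'cV[rat]_n :=
  \col_i (if i \in J then 1 else 0).

Definition hyp (n : nat) (J : {set 'I_n}) : {vspace 'rV[rat]_n} :=
  lker (linfun (fun x : 'rV[rat]_n => x *m indic J)).

Definition circuit_triple (n : nat) (T : {set {set 'I_n}}) : bool :=
  [&& #|T| == 3, set0 \notin T &
      [exists A in T, exists B in T, exists C in T,
        [&& A != B, A :&: B == set0 & C == A :|: B]]].

From HB Require Import structures.
From mathcomp Require Import all_boot all_order all_algebra.
Set Implicit Arguments. Unset Strict Implicit. Unset Printing Implicit Defensive.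
Import GRing.Theory.
Local Open Scope ring_scope.

(* Write a_J for the linear form sum_{j in J} x_j.  For A != B, the equality
   H_A ∩ H_I = H_B ∩ H_I holds iff {I, A, B} is a circuit-triple: testing it on
   the vectors e_u, e_u - e_v and e_u - e_v + e_w forces B to be the symmetric
   difference of I and A, with one of the three pairwise intersections empty.
   Since the third set of a circuit-triple is the symmetric difference of the
   other two, the fibres of j |-> H_{I_j} ∩ H_I have at most two elements, so
   |A'| - |A''_I| counts the two-element fibres, and these are in bijection with
   the circuit-triples through I. *)

Section Circuits.
Variable T : finType.
Implicit Types X Y Z : {set T}.

Definition symdiff X Y := [set x | (x \in X) != (x \in Y)].
Definition is_dunion X Y Z := (X :&: Y == set0) && (Z == X :|: Y).
Definition circuit3 X Y Z := [|| is_dunion X Y Z, is_dunion X Z Y | is_dunion Y Z X].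

Lemma symdiffC X Y : symdiff X Y = symdiff Y X.
Proof. by apply/setP => x; rewrite !inE eq_sym. Qed.

Lemma eq_symdiffC X Y Z : (Y == symdiff X Z) = (Z == symdiff X Y).
Proof.
by apply/eqP/eqP => ->; apply/setP => x; rewrite !inE; case: (x \in X); case: (x \in _).
Qed.

Lemma is_dunionE X Y Z : is_dunion X Y Z = (X :&: Y == set0) && (Z == symdiff X Y).
Proof.
apply: andb_id2l => /eqP /setP XY0; congr (_ == _); apply/setP => x.
by move: (XY0 x); rewrite !inE; case: (x \in X); case: (x \in Y).
Qed.

Lemma circuit3E X Y Z :
  circuit3 X Y Z = (Z == symdiff X Y) && [|| X :&: Y == set0, X :&: Z == set0 | Y :&: Z == set0].
Proof.
rewrite /circuit3 !is_dunionE (eq_symdiffC X Y Z) (eq_symdiffC Y X Z) (symdiffC Y X).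
by rewrite -!andb_orl andbC.
Qed.

Lemma circuit3_symdiff X Y Z : circuit3 X Y Z -> Z = symdiff X Y.
Proof. by rewrite circuit3E => /andP[/eqP]. Qed.

Lemma circuit3C X Y Z : circuit3 X Y Z = circuit3 Y X Z.
Proof. by rewrite !circuit3E (symdiffC Y X) (setIC Y X) [(Y :&: Z == _) || _]orbC. Qed.

Lemma circuit3_rotate X Y Z : circuit3 X Y Z = circuit3 Y Z X.
Proof.
rewrite !circuit3E (eq_symdiffC Y X Z) (symdiffC Y X) (setIC Y X) (setIC Z X).
by rewrite [in RHS]orbC -orbA.
Qed.

Lemma circuit3_neq X Y Z :
  X != set0 -> Y != set0 -> circuit3 X Y Z -> (Z != X) && (Z != Y).
Proof.
move=> /set0Pn[x Xx] /set0Pn[y Yy] /circuit3_symdiff ->.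
apply/andP; split; apply/negP => /eqP /setP; [move/(_ y) | move/(_ x)];
  by rewrite !inE ?Xx ?Yy; case: (_ \in _).
Qed.
End Circuits.

Lemma circuit_triple3 n (X Y Z : {set 'I_n}) :
  X != set0 -> Y != set0 -> Z != set0 -> X != Y -> X != Z -> Y != Z ->
  circuit_triple [set X; Y; Z] = circuit3 X Y Z.
Proof.
move=> nX nY nZ XY XZ YZ; set T := [set X; Y; Z].
have T0 : set0 \notin T by rewrite !inE !negb_or ![set0 == _]eq_sym nX nY nZ.
have T3 : #|T| == 3 by rewrite /T setUC cardsU1 cards2 !inE negb_or XY ![Z == _]eq_sym XZ YZ.
rewrite /circuit_triple T3 T0 /=.
apply/idP/idP.
- case/existsP => A /andP[TA /existsP[B /andP[TB /existsP[C /andP[TC /andP[AB D]]]]]].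
  have ABC : circuit3 A B C by apply/or3P/Or31.
  have nA : A != set0 by apply: contraNneq T0 => <-.
  have nB : B != set0 by apply: contraNneq T0 => <-.
  have /andP[CA CB] := circuit3_neq nA nB ABC.
  move: TA TB TC AB CA CB ABC; rewrite !inE.
  move=> /orP[/orP[]|]/eqP-> /orP[/orP[]|]/eqP-> /orP[/orP[]|]/eqP->; rewrite ?eqxx // => _ _ _;
  (* the surviving cases are the six permutations of (X, Y, Z) *)
  first [ done | by rewrite circuit3C | by rewrite circuit3_rotate
        | by rewrite circuit3_rotate circuit3_rotate | by rewrite circuit3C circuit3_rotate
        | by rewrite circuit3_rotate circuit3C ].
- have triple_witness A B C : A \in T -> B \in T -> C \in T -> A != B -> is_dunion A B C ->
    [exists A in T, exists B in T, exists C in T, [&& A != B, A :&: B == set0 & C == A :|: B]].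
    move=> TA TB TC AB D; apply/existsP; exists A; rewrite TA; apply/existsP; exists B.
    by rewrite TB; apply/existsP; exists C; rewrite TC AB.
  by case/or3P; apply: triple_witness; rewrite ?inE ?eqxx ?orbT.
Qed.

Section LinearForms.
Variable n : nat.
Implicit Types (J X Y Z : {set 'I_n}) (x y : 'rV[rat]_n).

Definition lform J x : rat := (x *m indic J) ord0 ord0.

Lemma mem_hyp J x : (x \in hyp J) = (lform J x == 0).
Proof.
rewrite /hyp memv_ker (lfunE (mulmxr (indic J))) /= /lform.
apply/eqP/eqP => [->|x0]; first by rewrite mxE.
by rewrite [x *m _]mx11_scalar x0 raddf0.
Qed.

Lemma mem_hyp_cap X Y x :
  (x \in (hyp X :&: hyp Y)%VS) = (lform X x == 0) && (lform Y x == 0).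
Proof. by rewrite memv_cap !mem_hyp. Qed.

Lemma lformD J x y : lform J (x + y) = lform J x + lform J y.
Proof. by rewrite /lform mulmxDl mxE. Qed.

Lemma lformN J x : lform J (- x) = - lform J x.
Proof. by rewrite /lform mulNmx !mxE. Qed.

Lemma lform_delta J u : lform J (delta_mx 0 u) = (u \in J)%:R.
Proof. by rewrite /lform -rowE !mxE; case: (u \in J). Qed.

Lemma hyp_inj : injective (@hyp n).
Proof.
move=> X Y XY; apply/setP => u.
have := mem_hyp X (delta_mx 0 u); rewrite XY mem_hyp !lform_delta.
by case: (u \in X); case: (u \in Y).
Qed.

Lemma lform_dunion X Y Z x : is_dunion X Y Z -> lform Z x = lform X x + lform Y x.
Proof.
case/andP => /eqP/setP XY0 /eqP ->.
suff E : indic (X :|: Y) = indic X + indic Y by rewrite /lform E mulmxDr mxE.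
apply/matrixP => i j; move: (XY0 i); rewrite !mxE !inE.
by case: (i \in X); case: (i \in Y).
Qed.
End LinearForms.

Lemma circuit3_hyp_cap n (I A B : {set 'I_n}) :
  circuit3 I A B -> (hyp A :&: hyp I)%VS = (hyp B :&: hyp I)%VS.
Proof.
move=> IAB; apply/vspaceP => x; rewrite !mem_hyp_cap.
have [I0|] := eqVneq (lform I x) 0; rewrite ?andbF ?andbT //.
case/or3P: IAB => D.
- by rewrite (lform_dunion x D) I0 add0r.
- by rewrite (lform_dunion x D) I0 add0r.
- by move/eqP: I0; rewrite (lform_dunion x D) addr_eq0 => /eqP ->; rewrite oppr_eq0.
Qed.

Section HypCapEq.
Variables (n : nat) (I A B : {set 'I_n}).
Hypotheses (neqAB : A != B) (capAB : (hyp A :&: hyp I)%VS = (hyp B :&: hyp I)%VS).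

Lemma hyp_cap_test x :
  ((lform A x == 0) && (lform I x == 0)) = ((lform B x == 0) && (lform I x == 0)).
Proof. by rewrite -!mem_hyp_cap capAB. Qed.

Lemma hyp_cap_out u : u \notin I -> (u \in A) = (u \in B).
Proof.
move=> uI; have := hyp_cap_test (delta_mx 0 u); rewrite !lform_delta (negbTE uI).
by case: (u \in A); case: (u \in B).
Qed.

Lemma hyp_cap_in u v :
  u \in I -> v \in I -> ((u \in A) != (u \in B)) = ((v \in A) != (v \in B)).
Proof.
move=> uI vI; have := hyp_cap_test (delta_mx 0 u - delta_mx 0 v).
rewrite !lformD !lformN !lform_delta uI vI.
by case: (u \in A); case: (v \in A); case: (u \in B); case: (v \in B).
Qed.

Lemma hyp_cap_symdiff : B = symdiff I A.
Proof.
have [d dAB] : exists d, (d \in A) != (d \in B).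
  apply/existsP; apply: contraNT neqAB => /existsPn eqAB.
  by apply/eqP/setP => d; apply/eqP/negbNE.
have dI : d \in I by apply: contraR dAB => /hyp_cap_out ->.
apply/setP => u; rewrite inE; have [uI|uI] := boolP (u \in I).
- by move: (hyp_cap_in uI dI); rewrite dAB; case: (u \in A); case: (u \in B).
- by rewrite -hyp_cap_out //; case: (u \in A).
Qed.

Lemma hyp_cap_circuit3 : circuit3 I A B.
Proof.
rewrite circuit3E; apply/andP; split; first exact/eqP/hyp_cap_symdiff.
have memB u : (u \in B) = ((u \in I) != (u \in A)) by rewrite {1}hyp_cap_symdiff inE.
apply: contraT; rewrite !negb_or => /and3P[/set0Pn[v vIA] /set0Pn[w wIB] /set0Pn[u uAB]].
move: vIA wIB uAB; rewrite !inE !memB => /andP[vI vA] /andP[wI wB] /andP[uA uB].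
(* e_u - e_v + e_w lies in H_A and H_I but a_B takes the value 2 on it *)
have := hyp_cap_test (delta_mx 0 u - delta_mx 0 v + delta_mx 0 w).
rewrite !lformD !lformN !lform_delta !memB vI vA wI uA.
by move: wB uB; rewrite wI uA; case: (w \in A); case: (u \in I).
Qed.
End HypCapEq.

Lemma eq_hyp_cap n (I A B : {set 'I_n}) :
  A != B -> ((hyp A :&: hyp I)%VS == (hyp B :&: hyp I)%VS) = circuit3 I A B.
Proof.
by move=> neqAB; apply/eqP/idP; [exact: hyp_cap_circuit3 | exact: circuit3_hyp_cap].
Qed.

Definition pairs_of (T : finType) (r : rel T) : {set {set T}} :=
  [set [set x; y] | x in T, y in T & (x != y) && r x y].

Lemma eq_pairs_of (T : finType) (r1 r2 : rel T) :
  (forall x y, x != y -> r1 x y = r2 x y) -> pairs_of r1 = pairs_of r2.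
Proof.
move=> r12; apply/setP => P; apply/imset2P/imset2P => -[x y _];
  rewrite !inE /= => /andP[xy rxy] ->; exists x y; rewrite // !inE /= xy.
  by rewrite -r12.
by rewrite r12.
Qed.

Section FiberPairs.
Variables (T : finType) (U : eqType) (f : T -> U).

Definition fiber_rep x := odflt x [pick y | f y == f x].
Definition fiber_reps := [set x | fiber_rep x == x].

Lemma fiber_rep_eq x : f (fiber_rep x) = f x.
Proof. by rewrite /fiber_rep; case: pickP => [y /eqP|]. Qed.

Lemma eq_fiber_rep x y : f x = f y -> fiber_rep x = fiber_rep y.
Proof. by move=> fxy; rewrite /fiber_rep fxy; case: pickP => // /(_ y); rewrite eqxx. Qed.

Lemma fiber_repK x : fiber_rep (fiber_rep x) = fiber_rep x.
Proof. exact/eq_fiber_rep/fiber_rep_eq. Qed.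

Lemma size_undup_map_enum : size (undup [seq f x | x <- enum T]) = #|fiber_reps|.
Proof.
rewrite cardE -(size_map f); apply/perm_size/uniq_perm; first exact: undup_uniq.
  rewrite map_inj_in_uniq ?enum_uniq // => x y.
  by rewrite !mem_enum !inE => /eqP xR /eqP yR /eq_fiber_rep; rewrite xR yR.
move=> u; rewrite mem_undup; apply/mapP/mapP => -[x _ ->]; last by exists x; rewrite ?mem_enum.
by exists (fiber_rep x); rewrite ?fiber_rep_eq // mem_enum inE fiber_repK.
Qed.

Hypothesis fiber2 : forall x y z, x != y -> x != z -> f x = f y -> f x = f z -> y = z.

Lemma pairs_of_fiber_rep :
  pairs_of (fun x y => f x == f y) = [set [set x; fiber_rep x] | x in ~: fiber_reps].
Proof.
apply/setP => P; apply/imset2P/imsetP => [[x y _]|[x]].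
  rewrite !inE /= => /andP[xy /eqP fxy] ->; have := eq_fiber_rep fxy.
  have [rx ry|rx _] := eqVneq (fiber_rep x) x.
    by exists y; [rewrite !inE -ry rx | rewrite -ry rx setUC].
  exists x; rewrite ?inE //; congr [set x; _].
  by apply: fiber2 xy _ fxy (esym (fiber_rep_eq x)); rewrite eq_sym.
rewrite !inE => xr ->; exists x (fiber_rep x) => //.
by rewrite !inE /= eq_sym xr fiber_rep_eq eqxx.
Qed.

Lemma card_pairs_of_fibers :
  (#|T| - size (undup [seq f x | x <- enum T]))%N = #|pairs_of (fun x y => f x == f y)|.
Proof.
rewrite size_undup_map_enum pairs_of_fiber_rep -(cardsC fiber_reps) addKn.
rewrite card_in_imset // => x y; rewrite !inE => xr yr E.
have : x \in [set y; fiber_rep y] by rewrite -E !inE eqxx.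
rewrite !inE => /orP[/eqP // | /eqP xry].
by move: xr; rewrite xry fiber_repK eqxx.
Qed.
End FiberPairs.

Lemma circuit_triples_through n m (Is : 'I_m -> {set 'I_n}) (I : {set 'I_n}) :
  injective Is -> (forall j, Is j != set0) -> I != set0 -> (forall j, Is j != I) ->
  [set T : {set {set 'I_n}} | [&& circuit_triple T, I \in T & T \subset I |: [set Is j | j : 'I_m]]]
  = (fun P : {set 'I_m} => I |: Is @: P) @: pairs_of (fun j k => circuit3 I (Is j) (Is k)).
Proof.
move=> Is_inj Is0 I0 IsI.
have IsE a b : I |: Is @: [set a; b] = [set I; Is a; Is b].
  by rewrite imsetU1 imset_set1 setUA.
have circuitE a b : a != b -> circuit_triple [set I; Is a; Is b] = circuit3 I (Is a) (Is b).
  by move=> ab; rewrite circuit_triple3 //; rewrite ?Is0 1?(eq_sym I) ?IsI ?(inj_eq Is_inj).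
apply/setP => T; rewrite inE; apply/and3P/imsetP => [[cT IT TS] | [P]].
- have /cards2P[X [Y [XY TIE]]] : #|T :\ I| == 2.
    by case/and3P: cT; rewrite (cardsD1 I T) IT.
  have inIs Z : Z \in T :\ I -> exists a, Z = Is a.
    rewrite inE => /andP[ZI /(subsetP TS)]; rewrite inE (negbTE ZI).
    by case/imsetP => a _ ->; exists a.
  have [a Xa] : exists a, X = Is a by apply: inIs; rewrite TIE !inE eqxx.
  have [b Yb] : exists b, Y = Is b by apply: inIs; rewrite TIE !inE eqxx orbT.
  have ab : a != b by apply: contraNneq XY => ab; rewrite Xa Yb ab.
  have TE : T = [set I; Is a; Is b] by rewrite -(setD1K IT) TIE Xa Yb setUA.
  exists [set a; b]; last by rewrite IsE.
  by apply/imset2P; exists a b; rewrite // !inE /= ab -circuitE // -TE.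
- case/imset2P => a b _; rewrite !inE /= => /andP[ab IabC] -> ->.
  rewrite IsE circuitE // IabC !inE eqxx; split=> //.
  by apply/subsetP => Z; rewrite !inE -!orbA => /or3P[] /eqP ->; rewrite ?eqxx ?imset_f ?orbT.
Qed.

Theorem lemma2p9 (n m : nat) (Is : 'I_m -> {set 'I_n}) (I : {set 'I_n}) :
  injective Is ->
  (forall j, Is j != set0) ->
  I != set0 ->
  (forall j, Is j != I) ->
  (size (undup [seq hyp (Is j) | j <- enum 'I_m])
    - size (undup [seq (hyp (Is j) :&: hyp I)%VS | j <- enum 'I_m]))%N
  = #|[set T : {set {set 'I_n}} |
        [&& circuit_triple T, I \in T & T \subset I |: [set Is j | j : 'I_m]]]|.
Proof.
move=> Is_inj Is0 I0 IsI.
pose f j := (hyp (Is j) :&: hyp I)%VS.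
have f_eq j k : j != k -> (f j == f k) = circuit3 I (Is j) (Is k).
  by move=> jk; rewrite eq_hyp_cap // (inj_eq Is_inj).
rewrite undup_id; last by rewrite map_inj_uniq ?enum_uniq // => j k /hyp_inj/Is_inj.
have fiber2 x y z : x != y -> x != z -> f x = f y -> f x = f z -> y = z.
  move=> xy xz fxy fxz; apply: Is_inj.
  have /circuit3_symdiff -> : circuit3 I (Is x) (Is y) by rewrite -f_eq // fxy.
  by have /circuit3_symdiff -> : circuit3 I (Is x) (Is z) by rewrite -f_eq // fxz.
have add_I_inj : injective (fun P : {set 'I_m} => I |: Is @: P).
  have notI P : I \notin Is @: P by apply/imsetP => -[j _ /eqP]; rewrite eq_sym (negbTE (IsI j)).
  by move=> P Q /(congr1 (fun T => T :\ I)); rewrite !setU1K //; apply: imset_inj.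
rewrite size_map -cardE card_pairs_of_fibers // (eq_pairs_of f_eq).
by rewrite circuit_triples_through // card_imset.
Qed.
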